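(* Let $\mathcal K$ be a 2-category which admits Eilenberg–Moore constructions for monads and in which idempotent 2-cells split. Let $(V,\psi):(t,\mu,\eta)\to(t',\mu',\eta')$ be a 1-cell in $\mathrm{EM}^w(\mathcal K)$ and let $Vv\overset{\pi}{\Rightarrow}\widetilde V\overset{\iota}{\Rightarrow}Vv$ be a chosen splitting of the idempotent 2-cell $Vv\epsilon\ast\psi v\ast\eta'Vv$ (so $\widetilde V:J(t)\to k'$, $\pi\ast\iota=\widetilde V$, $\iota\ast\pi=Vv\epsilon\ast\psi v\ast\eta'Vv$). Put $\widetilde\psi:=\pi\ast Vv\epsilon\ast\psi v\ast t'\iota:t'\widetilde V\Rightarrow\widetilde V$. Then $(\widetilde V,\widetilde\psi)$ is a 1-cell $IJ(t)\to t'$ in $\mathrm{EM}(\mathcal K)$, i.e. $\widetilde\psi\ast t'\widetilde\psi=\widetilde\psi\ast\mu'\widetilde V$ and $\widetilde\psi\ast\eta'\widetilde V=\widetilde V$.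
   Context: Conventions in a 2-category $\mathcal K$: horizontal composition and whiskering by juxtaposition in the order of functor composition; identity 1-cell of $k$ written $k$, identity 2-cell of $V$ written $V$; vertical composition $\ast$ with $\alpha\ast\beta$ meaning $\beta$ then $\alpha$. A monad $(t,\mu,\eta)$ on $k$: $t:k\to k$, $\mu:tt\Rightarrow t$, $\eta:k\Rightarrow t$, associative and unital. A 1-cell $(t,\mu,\eta)\to(t',\mu',\eta')$ in $\mathrm{EM}^w(\mathcal K)$ ($t$ on $k$, $t'$ on $k'$) is a pair $(V,\psi)$, $V:k\to k'$, $\psi:t'V\Rightarrow Vt$, with $V\mu\ast\psi t\ast t'\psi=\psi\ast\mu'V$. In the Lack–Street 2-category $\mathrm{EM}(\mathcal K)$, a 1-cell from the identity monad $I(l)=(l,l,l)$ on a 0-cell $l$ to $(t',\mu',\eta')$ is a pair $(A,\alpha)$, $A:l\to k'$, $\alpha:t'A\Rightarrow A$ with $\alpha\ast t'\alpha=\alpha\ast\mu'A$ and $\alpha\ast\eta'A=A$. $\mathcal K$ admits Eilenberg–Moore constructions for monads: the inclusion 2-functor $I:\mathcal K\to\mathrm{EM}(\mathcal K)$ has a right 2-adjoint $J$; each monad $(t,\mu,\eta)$ on $k$ determines an adjunction $f\dashv v$, $f:k\to J(t)$, $v:J(t)\to k$, unit $\eta:k\Rightarrow vf$, counit $\epsilon:fv\Rightarrow J(t)$, with $t=vf$, $\mu=v\epsilon f$; for $t'$ the data are $f',v',\eta',\epsilon'$. Idempotent 2-cells split: for every $e:X\Rightarrow X$ with $e\ast e=e$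 there are $\widehat X$, $\iota:\widehat X\Rightarrow X$, $\pi:X\Rightarrow\widehat X$ with $\pi\ast\iota=\widehat X$ and $\iota\ast\pi=e$. The 2-cell $Vv\epsilon\ast\psi v\ast\eta'Vv$ is idempotent. *)

Definition castC {A : Type} (C : A -> A -> Type) {x x' y y' : A}
  (e1 : x = x') (e2 : y = y') (c : C x y) : C x' y' :=
  match e1 in _ = x0 return C x0 y' with
  | eq_refl => match e2 in _ = y0 return C x y0 with eq_refl => c end
  end.

(* A strict 2-category (a Cat-enriched category).
   comp1 g f  is  "g after f"  (functor-composition order);
   vcomp b a  is  "a then b"   (written  b * a  in the paper);
   hcomp b a  is the horizontal composite  b a . *)
Record TwoCat : Type := {
  ob : Type;
  hom : ob -> ob -> Type;
  cell : forall a b : ob, hom a b -> hom a b -> Type;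
  id1 : forall a : ob, hom a a;
  comp1 : forall a b c : ob, hom b c -> hom a b -> hom a c;
  id2 : forall (a b : ob) (f : hom a b), cell a b f f;
  vcomp : forall (a b : ob) (f g h : hom a b),
      cell a b g h -> cell a b f g -> cell a b f h;
  hcomp : forall (a b c : ob) (g g' : hom b c) (f f' : hom a b),
      cell b c g g' -> cell a b f f' ->
      cell a c (comp1 a b c g f) (comp1 a b c g' f');
  comp1A : forall (a b c d : ob) (h : hom c d) (g : hom b c) (f : hom a b),
      comp1 a c d h (comp1 a b c g f) = comp1 a b d (comp1 b c d h g) f;
  comp1_id1l : forall (a b : ob) (f : hom a b), comp1 a b b (id1 b) f = f;
  comp1_id1r : forall (a b : ob) (f : hom a b), comp1 a a b f (id1 a) = f;
  vcompA : forall (a b : ob) (f g h i : hom a b)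
      (z : cell a b h i) (y : cell a b g h) (x : cell a b f g),
      vcomp a b f h i z (vcomp a b f g h y x)
      = vcomp a b f g i (vcomp a b g h i z y) x;
  vcomp_id2l : forall (a b : ob) (f g : hom a b) (x : cell a b f g),
      vcomp a b f g g (id2 a b g) x = x;
  vcomp_id2r : forall (a b : ob) (f g : hom a b) (x : cell a b f g),
      vcomp a b f f g x (id2 a b f) = x;
  hcomp_id2 : forall (a b c : ob) (g : hom b c) (f : hom a b),
      hcomp a b c g g f f (id2 b c g) (id2 a b f) = id2 a c (comp1 a b c g f);
  interchange : forall (a b c : ob) (g g' g'' : hom b c) (f f' f'' : hom a b)
      (y' : cell b c g' g'') (y : cell b c g g')
      (x' : cell a b f' f'') (x : cell a b f f'),
      hcomp a b c g g'' f f'' (vcomp b c g g' g'' y' y) (vcomp a b f f' f'' x' x)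
      = vcomp a c _ _ _ (hcomp a b c g' g'' f' f'' y' x') (hcomp a b c g g' f f' y x);
  hcompA : forall (a b c d : ob) (h h' : hom c d) (g g' : hom b c) (f f' : hom a b)
      (z : cell c d h h') (y : cell b c g g') (x : cell a b f f'),
      hcomp a c d h h' (comp1 a b c g f) (comp1 a b c g' f') z
            (hcomp a b c g g' f f' y x)
      = castC (cell a d) (eq_sym (comp1A a b c d h g f)) (eq_sym (comp1A a b c d h' g' f'))
          (hcomp a b d (comp1 b c d h g) (comp1 b c d h' g') f f'
                 (hcomp b c d h h' g g' z y) x);
  hcomp_id1l : forall (a b : ob) (f f' : hom a b) (x : cell a b f f'),
      hcomp a b b (id1 b) (id1 b) f f' (id2 b b (id1 b)) x
      = castC (cell a b) (eq_sym (comp1_id1l a b f)) (eq_sym (comp1_id1l a b f')) x;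
  hcomp_id1r : forall (a b : ob) (f f' : hom a b) (x : cell a b f f'),
      hcomp a a b f f' (id1 a) (id1 a) x (id2 a a (id1 a))
      = castC (cell a b) (eq_sym (comp1_id1r a b f)) (eq_sym (comp1_id1r a b f')) x
}.

Arguments hom {K} a b : rename.
Arguments cell {K a b} f g : rename.
Arguments id1 {K} a : rename.
Arguments comp1 {K a b c} g f : rename.
Arguments id2 {K a b} f : rename.
Arguments vcomp {K a b f g h} y x : rename.
Arguments hcomp {K a b c g g' f f'} y x : rename.
Arguments comp1A {K a b c d} h g f : rename.
Arguments comp1_id1l {K a b} f : rename.
Arguments comp1_id1r {K a b} f : rename.

Set Implicit Arguments.

Section TwoCatDefs.
Context {K : TwoCat}.

Definition cast2 {a b : ob K} {f f' g g' : hom a b}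
  (e1 : f = f') (e2 : g = g') (x : cell f g) : cell f' g' :=
  castC (@cell K a b) e1 e2 x.

Definition whL {a b c : ob K} (h : hom b c) {f g : hom a b} (x : cell f g)
  : cell (comp1 h f) (comp1 h g) := hcomp (id2 h) x.
Definition whR {a b c : ob K} {f g : hom b c} (x : cell f g) (h : hom a b)
  : cell (comp1 f h) (comp1 g h) := hcomp x (id2 h).

Definition is_monad {k : ob K} (t : hom k k)
  (mu : cell (comp1 t t) t) (eta : cell (id1 k) t) : Prop :=
  vcomp mu (whL t mu) = cast2 (eq_sym (comp1A t t t)) eq_refl (vcomp mu (whR mu t))
  /\ vcomp mu (whL t eta) = cast2 (eq_sym (comp1_id1r t)) eq_refl (id2 t)
  /\ vcomp mu (whR eta t) = cast2 (eq_sym (comp1_id1l t)) eq_refl (id2 t).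

Definition is_EMw_cell {k k' : ob K} {t : hom k k} {t' : hom k' k'}
  (mu : cell (comp1 t t) t) (mu' : cell (comp1 t' t') t')
  (V : hom k k') (psi : cell (comp1 t' V) (comp1 V t)) : Prop :=
  vcomp (whL V mu)
    (vcomp (cast2 (eq_sym (comp1A t' V t)) (eq_sym (comp1A V t t)) (whR psi t))
           (whL t' psi))
  = cast2 (eq_sym (comp1A t' t' V)) eq_refl (vcomp psi (whR mu' V)).

Definition is_EM_cell_from_id {l k' : ob K} {t' : hom k' k'}
  (mu' : cell (comp1 t' t') t') (eta' : cell (id1 k') t')
  (A : hom l k') (alpha : cell (comp1 t' A) A) : Prop :=
  vcomp alpha (whL t' alpha)
    = cast2 (eq_sym (comp1A t' t' A)) eq_refl (vcomp alpha (whR mu' A))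
  /\ vcomp alpha (whR eta' A) = cast2 (eq_sym (comp1_id1l A)) eq_refl (id2 A).

Lemma EM_eq_tt {k J : ob K} {t : hom k k} {f : hom k J} {v : hom J k} :
  t = comp1 v f -> comp1 t t = comp1 v (comp1 (comp1 f v) f).
Proof.
  intros e; subst t. rewrite (comp1A v (comp1 f v) f), (comp1A v f v).
  apply comp1A.
Qed.

Lemma EM_eq_t {k J : ob K} {t : hom k k} {f : hom k J} {v : hom J k} :
  t = comp1 v f -> t = comp1 v (comp1 (id1 J) f).
Proof. intros e; subst t. now rewrite comp1_id1l. Qed.

Lemma EM_eq_lam {k J l : ob K} {t : hom k k} {f : hom k J} {v : hom J k}
  (B : hom l J) :
  t = comp1 v f -> comp1 (comp1 v (comp1 f v)) B = comp1 t (comp1 v B).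
Proof.
  intros e; subst t. rewrite (comp1A v f v), (comp1A (comp1 v f) v B).
  reflexivity.
Qed.

Lemma EM_eq_lam' {J k l : ob K} {v : hom J k} (B : hom l J) :
  comp1 (comp1 v (id1 J)) B = comp1 v B.
Proof. now rewrite comp1_id1r. Qed.

Definition EM_lam {k J l : ob K} {t : hom k k} {f : hom k J} {v : hom J k}
  (eps : cell (comp1 f v) (id1 J)) (e : t = comp1 v f) (B : hom l J)
  : cell (comp1 t (comp1 v B)) (comp1 v B) :=
  cast2 (EM_eq_lam B e) (EM_eq_lam' B) (whR (whL v eps) B).

(* f -| v with unit eta, counit eps, t = v f, mu = v eps f, and J is the
   Eilenberg-Moore object of t: composing with the counit (v, v eps) of the
   2-adjunction I -| J is an isomorphism between K(l, J) and the category of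
   EM(K)-1-cells I(l) -> t (t-algebras on l) with algebra morphisms. *)
Definition is_EM_construction {k J : ob K} {t : hom k k}
  (mu : cell (comp1 t t) t) (eta : cell (id1 k) t)
  (f : hom k J) (v : hom J k) (eps : cell (comp1 f v) (id1 J))
  (e : t = comp1 v f) : Prop :=
  let etaa : cell (id1 k) (comp1 v f) := cast2 eq_refl e eta in
  mu = cast2 (eq_sym (EM_eq_tt e)) (eq_sym (EM_eq_t e)) (whL v (whR eps f))
  /\ vcomp (cast2 (eq_sym (comp1A f v f)) (comp1_id1l f) (whR eps f)) (whL f etaa)
     = cast2 (eq_sym (comp1_id1r f)) eq_refl (id2 f)
  /\ vcomp (cast2 (comp1A v f v) (comp1_id1r v) (whL v eps)) (whR etaa v)
     = cast2 (eq_sym (comp1_id1l v)) eq_refl (id2 v)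
  /\ (forall (l : ob K) (A : hom l k) (alpha : cell (comp1 t A) A),
        is_EM_cell_from_id mu eta A alpha ->
        exists! B : hom l J, exists h : comp1 v B = A,
          castC (@cell K l k) (f_equal (comp1 t) h) h (EM_lam eps e B) = alpha)
  /\ (forall (l : ob K) (B1 B2 : hom l J) (th : cell (comp1 v B1) (comp1 v B2)),
        vcomp th (EM_lam eps e B1) = vcomp (EM_lam eps e B2) (whL t th) ->
        exists! s : cell B1 B2, whL v s = th).

Definition admits_EM : Prop :=
  forall (k : ob K) (t : hom k k) (mu : cell (comp1 t t) t) (eta : cell (id1 k) t),
    is_monad t mu eta ->
    exists (J : ob K) (f : hom k J) (v : hom J k) (eps : cell (comp1 f v) (id1 J))
           (e : t = comp1 v f), is_EM_construction mu eta f v eps e.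

Definition idempotents_split : Prop :=
  forall (a b : ob K) (X : hom a b) (x : cell X X), vcomp x x = x ->
    exists (Xh : hom a b) (iota : cell Xh X) (pi : cell X Xh),
      vcomp pi iota = id2 Xh /\ vcomp iota pi = x.

Lemma eq_psiv {k k' J : ob K} {t : hom k k} {f : hom k J} {v : hom J k}
  (V : hom k k') :
  t = comp1 v f -> comp1 (comp1 V t) v = comp1 (comp1 V v) (comp1 f v).
Proof.
  intros e; subst t. rewrite (comp1A V v f).
  symmetry; apply comp1A.
Qed.

Definition cell_etaVv {k k' J : ob K} {t' : hom k' k'} (eta' : cell (id1 k') t')
  (V : hom k k') (v : hom J k) : cell (comp1 V v) (comp1 t' (comp1 V v)) :=
  cast2 (comp1_id1l (comp1 V v)) eq_refl (whR eta' (comp1 V v)).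

Definition cell_psiv {k k' J : ob K} {t : hom k k} {t' : hom k' k'}
  {f : hom k J} {v : hom J k} (e : t = comp1 v f)
  (V : hom k k') (psi : cell (comp1 t' V) (comp1 V t))
  : cell (comp1 t' (comp1 V v)) (comp1 (comp1 V v) (comp1 f v)) :=
  cast2 (eq_sym (comp1A t' V v)) (eq_psiv V e) (whR psi v).

Definition cell_Vveps {k k' J : ob K} {f : hom k J} {v : hom J k}
  (V : hom k k') (eps : cell (comp1 f v) (id1 J))
  : cell (comp1 (comp1 V v) (comp1 f v)) (comp1 V v) :=
  cast2 eq_refl (comp1_id1r (comp1 V v)) (whL (comp1 V v) eps).

Definition idem_cell {k k' J : ob K} {t : hom k k} {t' : hom k' k'}
  {f : hom k J} {v : hom J k} (e : t = comp1 v f)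
  (eps : cell (comp1 f v) (id1 J)) (eta' : cell (id1 k') t')
  (V : hom k k') (psi : cell (comp1 t' V) (comp1 V t)) : cell (comp1 V v) (comp1 V v) :=
  vcomp (cell_Vveps V eps) (vcomp (cell_psiv e V psi) (cell_etaVv eta' V v)).

Definition psi_tilde {k k' J : ob K} {t : hom k k} {t' : hom k' k'}
  {f : hom k J} {v : hom J k} (e : t = comp1 v f)
  (eps : cell (comp1 f v) (id1 J))
  (V : hom k k') (psi : cell (comp1 t' V) (comp1 V t))
  {Vt : hom J k'} (pi : cell (comp1 V v) Vt) (iota : cell Vt (comp1 V v))
  : cell (comp1 t' Vt) Vt :=
  vcomp pi (vcomp (cell_Vveps V eps) (vcomp (cell_psiv e V psi) (whL t' iota))).

End TwoCatDefs.

(* An associative action [alpha : t' A => A] of the monad t' is not yet an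
   algebra, but [alpha * eta' A] is idempotent, and splitting it through
   [A~] turns [pi * alpha * t' iota] into a genuine t'-algebra: the unit law
   is the splitting itself, and associativity follows from that of [alpha]
   together with [mu' * t' eta' = t'] and naturality.  For an EM^w 1-cell
   [(V, psi)] the action [V v eps * psi v] on [V v] is associative because
   [mu = v eps f]. *)

From Stdlib Require Import Eqdep ClassicalEpsilon.

(* Composites of 2-cells only typecheck up to the associativity and unit
   equations of 1-cells, which hold propositionally.  We therefore compute
   with 2-cells packed together with their source and target; vertical
   composition of packed cells is made total by returning junk when the
   boundaries do not match. *)
Section PackedCells.
Context {K : TwoCat}.

Definition pcell (a b : ob K) : Type :=
  {p : hom a b * hom a b & cell (fst p) (snd p)}.

Definition pack {a b : ob K} {f g : hom a b} (x : cell f g) : pcell a b :=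
  existT (fun p : hom a b * hom a b => cell (fst p) (snd p)) (f, g) x.

Definition psrc {a b : ob K} (X : pcell a b) : hom a b := fst (projT1 X).
Definition ptgt {a b : ob K} (X : pcell a b) : hom a b := snd (projT1 X).

Definition phcomp {a b c : ob K} (Y : pcell b c) (X : pcell a b) : pcell a c :=
  pack (hcomp (projT2 Y) (projT2 X)).

Definition pid2 {a b : ob K} (f : hom a b) : pcell a b := pack (id2 f).

Definition pvcomp {a b : ob K} (Y X : pcell a b) : pcell a b :=
  match excluded_middle_informative (ptgt X = psrc Y) with
  | left h => pack (vcomp (projT2 Y) (castC (@cell K a b) eq_refl h (projT2 X)))
  | right _ => Y
  end.

End PackedCells.

Infix "•" := pvcomp (at level 39, right associativity).
Infix "⋆" := phcomp (at level 35, right associativity).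

Section PackedCalculus.
Context {K : TwoCat}.

Lemma pack_inj {a b : ob K} {f g : hom a b} (x y : cell f g) : pack x = pack y -> x = y.
Proof. intro H. exact (inj_pair2 _ _ _ _ _ H). Qed.

Lemma pack_cast {a b : ob K} {f f' g g' : hom a b} (e1 : f = f') (e2 : g = g')
  (x : cell f g) : pack (castC (@cell K a b) e1 e2 x) = pack x.
Proof. destruct e1, e2; reflexivity. Qed.

Lemma pack_hcomp {a b c : ob K} {g g' : hom b c} {f f' : hom a b}
  (y : cell g g') (x : cell f f') : pack (hcomp y x) = pack y ⋆ pack x.
Proof. reflexivity. Qed.

Lemma pack_id2 {a b : ob K} (f : hom a b) : pack (id2 f) = pid2 f.
Proof. reflexivity. Qed.

Lemma pack_vcomp {a b : ob K} {f g h : hom a b} (y : cell g h) (x : cell f g) :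
  pack (vcomp y x) = pack y • pack x.
Proof.
  unfold pvcomp. destruct (excluded_middle_informative _) as [e|n].
  - cbn in *. rewrite (UIP_refl _ _ e). reflexivity.
  - exfalso; apply n; reflexivity.
Qed.

Lemma psrc_pack {a b : ob K} {f g : hom a b} (x : cell f g) : psrc (pack x) = f.
Proof. reflexivity. Qed.
Lemma ptgt_pack {a b : ob K} {f g : hom a b} (x : cell f g) : ptgt (pack x) = g.
Proof. reflexivity. Qed.
Lemma psrc_pid2 {a b : ob K} (f : hom a b) : psrc (pid2 f) = f.
Proof. reflexivity. Qed.
Lemma ptgt_pid2 {a b : ob K} (f : hom a b) : ptgt (pid2 f) = f.
Proof. reflexivity. Qed.
Lemma psrc_phcomp {a b c : ob K} (Y : pcell b c) (X : pcell a b) :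
  psrc (Y ⋆ X) = comp1 (psrc Y) (psrc X).
Proof. reflexivity. Qed.
Lemma ptgt_phcomp {a b c : ob K} (Y : pcell b c) (X : pcell a b) :
  ptgt (Y ⋆ X) = comp1 (ptgt Y) (ptgt X).
Proof. reflexivity. Qed.

Ltac unpack X :=
  let f := fresh "f" in let g := fresh "g" in let x := fresh "x" in
  destruct X as [[f g] x]; cbn [psrc ptgt projT1 fst snd] in *.

Lemma psrc_pvcomp {a b : ob K} (Y X : pcell a b) :
  ptgt X = psrc Y -> psrc (Y • X) = psrc X.
Proof.
  unpack Y; unpack X; intro; subst.
  change (psrc (pack x • pack x0) = f0). rewrite <- pack_vcomp; reflexivity.
Qed.

Lemma ptgt_pvcomp {a b : ob K} (Y X : pcell a b) :
  ptgt X = psrc Y -> ptgt (Y • X) = ptgt Y.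
Proof.
  unpack Y; unpack X; intro; subst.
  change (ptgt (pack x • pack x0) = g). rewrite <- pack_vcomp; reflexivity.
Qed.

Lemma pvcompA {a b : ob K} (Z Y X : pcell a b) :
  ptgt X = psrc Y -> ptgt Y = psrc Z -> (Z • Y) • X = Z • Y • X.
Proof.
  unpack X; unpack Y; unpack Z; intros; subst.
  change ((pack x1 • pack x0) • pack x = pack x1 • pack x0 • pack x).
  rewrite <- !pack_vcomp, vcompA; reflexivity.
Qed.

Lemma pvcomp_id2l {a b : ob K} (X : pcell a b) (g : hom a b) :
  ptgt X = g -> pid2 g • X = X.
Proof.
  unpack X; intro; subst. change (pack (id2 g) • pack x = pack x).
  rewrite <- pack_vcomp, vcomp_id2l; reflexivity.
Qed.

Lemma pvcomp_id2r {a b : ob K} (X : pcell a b) (f : hom a b) :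
  psrc X = f -> X • pid2 f = X.
Proof.
  unpack X; intro; subst. change (pack x • pack (id2 f) = pack x).
  rewrite <- pack_vcomp, vcomp_id2r; reflexivity.
Qed.

Lemma phcompA {a b c d : ob K} (Z : pcell c d) (Y : pcell b c) (X : pcell a b) :
  Z ⋆ Y ⋆ X = (Z ⋆ Y) ⋆ X.
Proof.
  unpack X; unpack Y; unpack Z.
  change (pack (hcomp x1 (hcomp x0 x)) = pack (hcomp (hcomp x1 x0) x)).
  rewrite hcompA. apply pack_cast.
Qed.

Lemma phcomp_id2 {a b c : ob K} (g : hom b c) (f : hom a b) :
  pid2 g ⋆ pid2 f = pid2 (comp1 g f).
Proof. unfold pid2, phcomp. cbn. rewrite hcomp_id2. reflexivity. Qed.

Lemma phcomp_id2r {a b c d : ob K} (X : pcell c d) (g : hom b c) (f : hom a b) :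
  (X ⋆ pid2 g) ⋆ pid2 f = X ⋆ pid2 (comp1 g f).
Proof. rewrite <- phcompA, phcomp_id2. reflexivity. Qed.

Lemma phcomp_id1l {a b : ob K} (X : pcell a b) : pid2 (id1 b) ⋆ X = X.
Proof.
  unpack X. change (pack (hcomp (id2 (id1 b)) x) = pack x).
  rewrite hcomp_id1l. apply pack_cast.
Qed.

Lemma phcomp_id1r {a b : ob K} (X : pcell a b) : X ⋆ pid2 (id1 a) = X.
Proof.
  unpack X. change (pack (hcomp x (id2 (id1 a))) = pack x).
  rewrite hcomp_id1r. apply pack_cast.
Qed.

Lemma pinterchange {a b c : ob K} (Y' Y : pcell b c) (X' X : pcell a b) :
  ptgt Y = psrc Y' -> ptgt X = psrc X' -> (Y' • Y) ⋆ (X' • X) = (Y' ⋆ X') • (Y ⋆ X).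
Proof.
  unpack X; unpack Y; unpack X'; unpack Y'; intros; subst.
  change ((pack x2 • pack x0) ⋆ (pack x1 • pack x)
          = (pack x2 ⋆ pack x1) • (pack x0 ⋆ pack x)).
  rewrite <- !pack_vcomp, <- !pack_hcomp, <- pack_vcomp, interchange.
  reflexivity.
Qed.

Lemma phcomp_natl {a b c : ob K} (Y : pcell b c) (X : pcell a b) (g : hom b c) (f : hom a b) :
  ptgt Y = g -> psrc X = f -> Y ⋆ X = (pid2 g ⋆ X) • (Y ⋆ pid2 f).
Proof.
  intros; subst. rewrite <- pinterchange by reflexivity.
  rewrite pvcomp_id2l, pvcomp_id2r by reflexivity. reflexivity.
Qed.

Lemma phcomp_natr {a b c : ob K} (Y : pcell b c) (X : pcell a b) (g : hom a b) (f : hom b c) :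
  ptgt X = g -> psrc Y = f -> Y ⋆ X = (Y ⋆ pid2 g) • (pid2 f ⋆ X).
Proof.
  intros; subst. rewrite <- pinterchange by reflexivity.
  rewrite pvcomp_id2l, pvcomp_id2r by reflexivity. reflexivity.
Qed.

Lemma pwhiskerl_vcomp {a b c : ob K} (h : hom b c) (Y X : pcell a b) :
  ptgt X = psrc Y -> pid2 h ⋆ (Y • X) = (pid2 h ⋆ Y) • (pid2 h ⋆ X).
Proof.
  intros. rewrite <- pinterchange by auto. rewrite pvcomp_id2l by reflexivity. reflexivity.
Qed.

Lemma pwhiskerr_vcomp {a b c : ob K} (h : hom a b) (Y X : pcell b c) :
  ptgt X = psrc Y -> (Y • X) ⋆ pid2 h = (Y ⋆ pid2 h) • (X ⋆ pid2 h).
Proof.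
  intros. rewrite <- pinterchange by auto. rewrite pvcomp_id2l by reflexivity. reflexivity.
Qed.

Lemma pvcomp_rewrite {a b : ob K} {Y X Z : pcell a b} (H : Y • X = Z) (W : pcell a b) :
  ptgt W = psrc X -> ptgt X = psrc Y -> Y • X • W = Z • W.
Proof. intros ? ?. rewrite <- pvcompA by assumption. rewrite H. reflexivity. Qed.

End PackedCalculus.

Ltac hom_eq := repeat progress rewrite ?comp1A, ?comp1_id1l, ?comp1_id1r; reflexivity.

Ltac boundary :=
  repeat match goal with X := _ |- _ => subst X end;
  repeat first
    [ rewrite psrc_phcomp | rewrite ptgt_phcomp | rewrite psrc_pid2 | rewrite ptgt_pid2
    | rewrite psrc_pack | rewrite ptgt_pack
    | rewrite ptgt_pvcomp by boundary | rewrite psrc_pvcomp by boundary ];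
  hom_eq.

Ltac pack_in H :=
  unfold is_monad, is_EMw_cell, cast2, whL, whR in H;
  apply (f_equal pack) in H;
  repeat progress rewrite ?pack_vcomp, ?pack_hcomp, ?pack_cast, ?pack_id2 in H.

Ltac pack_goal :=
  unfold is_EM_cell_from_id, cast2, whL, whR;
  apply pack_inj;
  repeat progress rewrite ?pack_vcomp, ?pack_hcomp, ?pack_cast, ?pack_id2.

Ltac pnorm := repeat progress rewrite ?phcompA, ?phcomp_id2, ?phcomp_id2r.

Ltac pcongr :=
  repeat first
    [ reflexivity | apply (f_equal2 phcomp) | apply (f_equal2 pvcomp)
    | apply (f_equal pid2); hom_eq ].

Ltac reassoc := repeat rewrite pvcompA by boundary.

Section SplitAction.
Context {K : TwoCat}.

Definition is_assoc_action {l k' : ob K} {t' : hom k' k'}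
  (mu' : cell (comp1 t' t') t') (A : hom l k') (alpha : cell (comp1 t' A) A) : Prop :=
  vcomp alpha (whL t' alpha)
  = cast2 (eq_sym (comp1A t' t' A)) eq_refl (vcomp alpha (whR mu' A)).

Lemma split_action_is_EM_cell {l k' : ob K} {t' : hom k' k'}
  (mu' : cell (comp1 t' t') t') (eta' : cell (id1 k') t')
  (Ht' : is_monad t' mu' eta')
  (A : hom l k') (alpha : cell (comp1 t' A) A) (Halpha : is_assoc_action mu' A alpha)
  (At : hom l k') (pi : cell A At) (iota : cell At A)
  (Hpi_iota : vcomp pi iota = id2 At)
  (Hiota_pi : vcomp iota pi = vcomp alpha (cast2 (comp1_id1l A) eq_refl (whR eta' A))) :
  is_EM_cell_from_id mu' eta' At (vcomp pi (vcomp alpha (whL t' iota))).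
Proof.
  destruct Ht' as [_ [Hunit _]].
  unfold is_assoc_action in Halpha.
  pack_in Hunit. pack_in Halpha. pack_in Hpi_iota. pack_in Hiota_pi.
  set (P := pack pi) in *. set (io := pack iota) in *. set (al := pack alpha) in *.
  set (mu2 := pack mu') in *. set (et := pack eta') in *.
  set (I := pid2 t' ⋆ io). set (E := et ⋆ pid2 A) in *. set (M := mu2 ⋆ pid2 A) in *.
  assert (Hunit_A : M • (pid2 t' ⋆ E) = pid2 (comp1 t' A)).
  { unfold M, E. rewrite phcompA, <- pwhiskerr_vcomp by boundary.
    rewrite Hunit, phcomp_id2. reflexivity. }
  assert (Heta_nat : I • (et ⋆ pid2 At) = E • io).
  { unfold I, E. rewrite <- (phcomp_natl et io t' At) by boundary.
    rewrite (phcomp_natr et io A (id1 k')) by boundary. rewrite phcomp_id1l. reflexivity. }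
  assert (Hmu_nat : M • (pid2 t' ⋆ I) = I • (mu2 ⋆ pid2 At)).
  { unfold M, I. rewrite phcompA, phcomp_id2.
    rewrite <- (phcomp_natr mu2 io) by boundary. rewrite <- (phcomp_natl mu2 io) by boundary.
    reflexivity. }
  assert (Hsplit_t' : I • (pid2 t' ⋆ P) = (pid2 t' ⋆ al) • (pid2 t' ⋆ E)).
  { unfold I. rewrite <- !pwhiskerl_vcomp by boundary. rewrite Hiota_pi. reflexivity. }
  split; pack_goal; fold P io al mu2 et I E M.
  - rewrite !pwhiskerl_vcomp by boundary. reassoc.
    rewrite (pvcomp_rewrite Hsplit_t') by boundary. reassoc.
    rewrite (pvcomp_rewrite Halpha) by boundary. reassoc.
    rewrite (pvcomp_rewrite Hunit_A) by boundary. rewrite pvcomp_id2l by boundary.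
    rewrite (pvcomp_rewrite Halpha) by boundary. reassoc.
    rewrite Hmu_nat. reflexivity.
  - reassoc. rewrite Heta_nat.
    rewrite (pvcomp_rewrite (eq_sym Hiota_pi)) by boundary. reassoc.
    rewrite (pvcomp_rewrite Hpi_iota) by boundary. rewrite pvcomp_id2l by boundary.
    exact Hpi_iota.
Qed.

End SplitAction.

Section EMwAction.
Context {K : TwoCat}.

Definition EMw_action {k k' J : ob K} {t : hom k k} {t' : hom k' k'}
  {f : hom k J} {v : hom J k} (e : t = comp1 v f)
  (eps : cell (comp1 f v) (id1 J)) (V : hom k k') (psi : cell (comp1 t' V) (comp1 V t))
  : cell (comp1 t' (comp1 V v)) (comp1 V v) :=
  vcomp (cell_Vveps V eps) (cell_psiv e V psi).

Lemma EMw_action_assoc {k k' J : ob K} {t : hom k k} {t' : hom k' k'}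
  (mu : cell (comp1 t t) t) (mu' : cell (comp1 t' t') t')
  (f : hom k J) (v : hom J k) (eps : cell (comp1 f v) (id1 J)) (e : t = comp1 v f)
  (Hmu : mu = cast2 (eq_sym (EM_eq_tt e)) (eq_sym (EM_eq_t e)) (whL v (whR eps f)))
  (V : hom k k') (psi : cell (comp1 t' V) (comp1 V t)) (HV : is_EMw_cell mu mu' V psi) :
  is_assoc_action mu' (comp1 V v) (EMw_action e eps V psi).
Proof.
  subst t. unfold is_assoc_action, EMw_action, cell_Vveps, cell_psiv.
  pack_in HV. pack_in Hmu. pack_goal. rewrite Hmu in HV.
  set (ps := pack psi) in *. set (ep := pack eps) in *. set (mu2 := pack mu') in *.
  set (Ae := pid2 (comp1 V v) ⋆ ep). set (B := ps ⋆ pid2 v).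
  assert (Heps_nat : ep • (pid2 (comp1 f v) ⋆ ep) = ep • (ep ⋆ pid2 (comp1 f v))).
  { transitivity (ep ⋆ ep).
    - rewrite (phcomp_natr ep ep (id1 J) (comp1 f v)) by boundary.
      rewrite phcomp_id1r. reflexivity.
    - rewrite (phcomp_natl ep ep (id1 J) (comp1 f v)) by boundary.
      rewrite phcomp_id1l. reflexivity. }
  assert (Hpsi_nat : B • (pid2 t' ⋆ Ae)
    = (pid2 (comp1 V (comp1 v f)) ⋆ pid2 v ⋆ ep) • (ps ⋆ pid2 (comp1 v (comp1 f v)))).
  { transitivity (ps ⋆ pid2 v ⋆ ep).
    - rewrite (phcomp_natr ps (pid2 v ⋆ ep) v (comp1 t' V)) by boundary.
      unfold B, Ae. pnorm. pcongr.
    - apply phcomp_natl; boundary. }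
  assert (Hmu_eps : Ae • (pid2 (comp1 V (comp1 v f)) ⋆ pid2 v ⋆ ep)
    = Ae • ((pid2 V ⋆ pid2 v ⋆ ep ⋆ pid2 f) ⋆ pid2 v)).
  { transitivity (pid2 (comp1 V v) ⋆ (ep • (pid2 (comp1 f v) ⋆ ep))).
    - rewrite pwhiskerl_vcomp by boundary. unfold Ae. pnorm. pcongr.
    - rewrite Heps_nat, pwhiskerl_vcomp by boundary. unfold Ae. pnorm. pcongr. }
  assert (HV_v : ((pid2 V ⋆ pid2 v ⋆ ep ⋆ pid2 f) ⋆ pid2 v)
      • (ps ⋆ pid2 (comp1 v (comp1 f v))) • (pid2 t' ⋆ B)
    = B • (mu2 ⋆ pid2 (comp1 V v))).
  { apply (f_equal (fun X => X ⋆ pid2 v)) in HV. cbn beta in HV.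
    rewrite !pwhiskerr_vcomp in HV by boundary.
    refine (eq_trans _ (eq_trans HV _)); unfold B; pnorm; pcongr. }
  rewrite !pwhiskerl_vcomp by boundary. reassoc.
  rewrite (pvcomp_rewrite Hpsi_nat) by boundary. reassoc.
  rewrite (pvcomp_rewrite Hmu_eps) by boundary. reassoc.
  rewrite HV_v. reflexivity.
Qed.

End EMwAction.

Theorem lemma3p3 (K : TwoCat)
  (HEM : @admits_EM K) (Hsplit : @idempotents_split K)
  (k k' : ob K)
  (t : hom k k) (mu : cell (comp1 t t) t) (eta : cell (id1 k) t)
  (t' : hom k' k') (mu' : cell (comp1 t' t') t') (eta' : cell (id1 k') t')
  (Ht : is_monad t mu eta) (Ht' : is_monad t' mu' eta')
  (J : ob K) (f : hom k J) (v : hom J k) (eps : cell (comp1 f v) (id1 J))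
  (e : t = comp1 v f) (HJ : is_EM_construction mu eta f v eps e)
  (V : hom k k') (psi : cell (comp1 t' V) (comp1 V t))
  (HV : is_EMw_cell mu mu' V psi)
  (Vt : hom J k') (pi : cell (comp1 V v) Vt) (iota : cell Vt (comp1 V v))
  (Hpi_iota : vcomp pi iota = id2 Vt)
  (Hiota_pi : vcomp iota pi = idem_cell e eps eta' V psi) :
  is_EM_cell_from_id mu' eta' Vt (psi_tilde e eps V psi pi iota).
Proof.
  destruct HJ as [Hmu _].
  assert (Hidem : idem_cell e eps eta' V psi
                  = vcomp (EMw_action e eps V psi) (cell_etaVv eta' V v))
    by (unfold idem_cell, EMw_action; apply vcompA).
  assert (Htilde : psi_tilde e eps V psi pi iota
                   = vcomp pi (vcomp (EMw_action e eps V psi) (whL t' iota)))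
    by (unfold psi_tilde, EMw_action; f_equal; apply vcompA).
  rewrite Htilde.
  apply (split_action_is_EM_cell mu' eta' Ht' _ _ (EMw_action_assoc mu mu' f v eps e Hmu V psi HV)).
  - exact Hpi_iota.
  - now rewrite Hiota_pi, Hidem.
Qed.
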